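(* Let $n\ge2$ and let $Q=K(n,n)$ be the complete bipartite quiver with $n$ sources and $n$ sinks and exactly one arrow from each source to each sink. Suppose $m_1+\dots+m_k=q_1+\dots+q_k$ for some $k\ge4$, where all $m_i,q_j$ are (characteristic vectors in $\mathbb{Z}^{Q_1}$ of) perfect matchings of $Q$. Suppose moreover that for some $0\le l\le n-2$ there is a near perfect matching $p$ with $p\le m_1+m_2$ such that $p$ contains $l$ arrows of $q_1$. Then there exist $j\ge3$, perfect matchings $m'_1,m'_2,m'_j$ and a near perfect matching $p'$ such that $m_1+m_2+m_j=m'_1+m'_2+m'_j$, $p'\le m'_1+m'_2$, and $p'$ contains $l+1$ arrows of $q_1$.
   Context: A perfect matching of $K(n,n)$ is a set of $n$ arrows covering each vertex exactly once; a near perfect matching is a set of $n-1$ pairwise disjoint arrows (covering all vertices except one source and one sink). Matchings are identified with their characteristic vectors in $\mathbb{Z}_{\ge0}^{Q_1}$, and $\le$ denotes the componentwise partial order on $\mathbb{Z}^{Q_1}$. *)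

From mathcomp Require Import all_boot.
Set Implicit Arguments. Unset Strict Implicit. Unset Printing Implicit Defensive.

(* The complete bipartite quiver K(n,n): sources and sinks are both 'I_n,
   and the arrow set Q_1 is 'I_n * 'I_n, the arrow (i,j) going from
   source i to sink j. *)
Definition arrow (n : nat) := ('I_n * 'I_n)%type.

Definition chi (n : nat) (M : {set arrow n}) (a : arrow n) : nat := (a \in M).

Definition perfect_matching (n : nat) (M : {set arrow n}) : Prop :=
  (forall i : 'I_n, #|[set a in M | a.1 == i]| = 1) /\
  (forall j : 'I_n, #|[set a in M | a.2 == j]| = 1).

Definition near_perfect_matching (n : nat) (P : {set arrow n}) : Prop :=
  #|P| = n.-1 /\
  (forall a b, a \in P -> b \in P -> a != b -> (a.1 != b.1) && (a.2 != b.2)).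

From mathcomp Require Import all_boot zify.
Set Implicit Arguments. Unset Strict Implicit. Unset Printing Implicit Defensive.

(* The near perfect matching p misses some source s; let a be the arrow of q_1
   leaving s.  Trading for a the arrow of p entering the sink of a (or, if there
   is none, any arrow of p outside q_1) yields a near perfect matching p' with
   one more arrow of q_1.  Since a occurs in some m_i, p' lies below the sum T of
   m_1, m_2 and a third m_j, a 3-regular bipartite multigraph.  By Hall's theorem
   T - p' contains a perfect matching C' (every set N of sinks carries weight at
   most 2|N| + 1 in T - p'), and the 2-regular remainder T - C' splits into two
   perfect matchings whose sum contains p'. *)

Section Hall.
(* [y0] is the junk value of matching functions off their domain; it is only
   needed for the empty domain, hence the [0 < n] hypotheses below. *)
Variables (X Y : finType) (E : X -> Y -> bool) (y0 : Y).
Implicit Types (A S : {set X}) (B : {set Y}).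

Definition neighbours S B := [set y in B | [exists x in S, E x y]].

Definition hall_condition A B := forall S, S \subset A -> #|S| <= #|neighbours S B|.

Definition matchable A B := exists f : X -> Y,
  {in A &, injective f} /\ {in A, forall x, f x \in B /\ E x (f x)}.

Lemma neighboursU S S' B :
  neighbours (S :|: S') B = neighbours S B :|: neighbours S' B.
Proof.
apply/setP=> y; rewrite !inE -andb_orr; congr (_ && _).
apply/existsP/orP => [[x] | [] /existsP[x]]; rewrite ?inE.
- by case/andP=> /orP[] xS Exy; [left | right]; apply/existsP; exists x; rewrite xS.
- by case/andP=> xS Exy; exists x; rewrite inE xS.
- by case/andP=> xS Exy; exists x; rewrite inE xS orbT.
Qed.

Lemma neighboursD S B B' : neighbours S (B :\: B') = neighbours S B :\: B'.
Proof. by apply/setP=> y; rewrite !inE; case: (y \in B'); rewrite ?andbF. Qed.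

Lemma hall_conditionS A A' B : A' \subset A -> hall_condition A B -> hall_condition A' B.
Proof. by move=> sA'A hAB S sSA'; apply: hAB; exact: subset_trans sSA' sA'A. Qed.

Lemma hall_condition_tight A B S : hall_condition A B -> S \subset A ->
  #|neighbours S B| <= #|S| -> hall_condition (A :\: S) (B :\: neighbours S B).
Proof.
move=> hAB sSA tightS S' sS'AS; rewrite neighboursD.
have disS'S : S' :&: S = set0.
  apply/setP=> x; rewrite !inE; apply/andP=> -[/(subsetP sS'AS)].
  by rewrite inE => /andP[/negPf->].
have := hAB (S' :|: S); rewrite subUset sSA (subset_trans sS'AS (subsetDl _ _)).
rewrite neighboursU cardsU cardsU disS'S cards0 subn0.
have := cardsD (neighbours S' B) (neighbours S B).
have := subset_leq_card (subsetIl (neighbours S' B) (neighbours S B)).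
move=> *; lia.
Qed.

Lemma hall_condition_surplus A B x y : x \in A ->
  (forall S, S \subset A -> S != set0 -> S != A -> #|S| < #|neighbours S B|) ->
  hall_condition (A :\ x) (B :\ y).
Proof.
move=> xA surplus S sSAx; have [-> | S0] := eqVneq S set0; first by rewrite cards0.
have sSA : S \subset A := subset_trans sSAx (subD1set _ _).
have SA : S != A.
  by apply: contraTneq sSAx => ->; apply/subsetPn; exists x; rewrite ?inE ?eqxx.
have := surplus S sSA S0 SA; rewrite neighboursD (cardsD1 y (neighbours S B)).
by case: (y \in neighbours S B) => /= ?; lia.
Qed.

Lemma matchable0 B : matchable set0 B.
Proof. by exists (fun=> y0); split=> [x|x]; rewrite inE. Qed.

Lemma matchable_glue A B S : S \subset A ->
  matchable S B -> matchable (A :\: S) (B :\: neighbours S B) -> matchable A B.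
Proof.
move=> sSA [f [injf fS]] [g [injg gAS]].
have inN x : x \in S -> f x \in neighbours S B.
  by move=> xS; have [fxB Exf] := fS x xS; rewrite inE fxB; apply/existsP; exists x; rewrite xS.
have notinN x : x \in A -> x \notin S -> g x \notin neighbours S B.
  by move=> xA xS; have [] := gAS x; rewrite ?inE ?xS ?xA // => /andP[].
exists (fun x => if x \in S then f x else g x); split=> [x x' xA x'A | x xA].
  case xS: (x \in S); case x'S: (x' \in S) => e.
  - exact: injf.
  - by move: (notinN x' x'A (negbT x'S)); rewrite -e inN.
  - by move: (notinN x xA (negbT xS)); rewrite e inN.
  - by apply: injg; rewrite // inE ?xS ?x'S.
case xS: (x \in S); first exact: fS.
by have [] := gAS x; rewrite ?inE ?xS // => /andP[].
Qed.

Lemma matchable_add A B x y : x \in A -> y \in B -> E x y ->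
  matchable (A :\ x) (B :\ y) -> matchable A B.
Proof.
move=> xA yB Exy [f [injf fAx]].
have fy x' : x' \in A -> x' != x -> f x' != y.
  by move=> x'A x'x; have [] := fAx x'; rewrite ?inE ?x'x // => /andP[].
exists (fun x' => if x' == x then y else f x'); split=> [x1 x2 x1A x2A | x' x'A].
  case: eqVneq => [-> | x1x]; case: eqVneq => [-> | x2x] //.
  - by move=> e; have := fy x2 x2A x2x; rewrite -e eqxx.
  - by move=> e; have := fy x1 x1A x1x; rewrite e eqxx.
  - by move=> e; apply: injf e; rewrite !inE ?x1x ?x2x.
case: (eqVneq x' x) => [-> // | x'x].
by have [] := fAx x'; rewrite ?inE ?x'x // => /andP[].
Qed.

Theorem hall A B : hall_condition A B -> matchable A B.
Proof.
move: {2}#|A| (leqnn #|A|) => m; elim: m A B => [|m IH] A B leAm hAB;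
  have [-> | [x xA]] := set_0Vmem A; try exact: matchable0.
  by move: leAm; rewrite leqn0 cards_eq0 => /eqP A0; rewrite A0 inE in xA.
have [S /and4P[sSA S0 SA tightS] | surplus] := pickP [pred S : {set X} | [&& S \subset A,
    S != set0, S != A & #|neighbours S B| <= #|S|]].
  have ltSA : #|S| < #|A| by apply: proper_card; rewrite properEneq SA.
  apply: (matchable_glue sSA); apply: IH.
  - lia.
  - exact: hall_conditionS sSA hAB.
  - by rewrite cardsDS //; move: S0; rewrite -card_gt0; lia.
  - exact: hall_condition_tight.
have [y] : exists y, y \in neighbours [set x] B.
  by apply/card_gt0P; have := hAB [set x]; rewrite sub1set xA cards1; apply.
rewrite inE => /andP[yB /existsP[x' /andP[]]]; rewrite inE => /eqP-> Exy.
apply: (matchable_add xA yB Exy); apply: IH.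
  by have := cardsD1 x A; rewrite xA; lia.
apply: hall_condition_surplus => // S sSA S0 SA; rewrite ltnNge.
by have := surplus S; rewrite /= sSA S0 SA /= => ->.
Qed.

End Hall.

Section Matchings.
Variable n : nat.
Implicit Types (M P : {set arrow n}) (w : arrow n -> nat) (f : arrow n -> 'I_n).

Definition line f w i := \sum_(a | f a == i) w a.

Definition regular c w := forall i, line fst w i = c /\ line snd w i = c.

Lemma line_chi f M i : line f (chi M) i = #|[set a in M | f a == i]|.
Proof.
rewrite /line -sum1_card big_mkcond [RHS]big_mkcond; apply: eq_bigr => a _.
by rewrite /chi !inE; case: (f a == i); case: (a \in M).
Qed.

Lemma lineD f w1 w2 i :
  line f (fun a => w1 a + w2 a) i = line f w1 i + line f w2 i.
Proof. exact: big_split. Qed.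

Lemma lineB f w1 w2 i : (forall a, w2 a <= w1 a) ->
  line f (fun a => w1 a - w2 a) i = line f w1 i - line f w2 i.
Proof. by move=> le21; rewrite /line sumnB. Qed.

Lemma leq_line f w a : w a <= line f w (f a).
Proof. by rewrite /line (bigD1 a) //= leq_addr. Qed.

Lemma sum_line_in f w (N : {set 'I_n}) :
  \sum_(i in N) line f w i = \sum_(a | f a \in N) w a.
Proof.
rewrite (partition_big f (mem N)) //=; apply: eq_bigr => j jN.
by apply: eq_bigl => a; rewrite andbC; case: eqP => [->|].
Qed.

Lemma sum_line f w : \sum_i line f w i = \sum_a w a.
Proof. by rewrite (partition_big f predT). Qed.

Lemma sum_chi M : \sum_a chi M a = #|M|.
Proof. by rewrite -sum1_card [RHS]big_mkcond; apply: eq_bigr => a _. Qed.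

Lemma regular_chi M : perfect_matching M -> regular 1 (chi M).
Proof. by case=> hs ht i; rewrite !line_chi hs ht. Qed.

Lemma regularD c1 c2 w1 w2 : regular c1 w1 -> regular c2 w2 ->
  regular (c1 + c2) (fun a => w1 a + w2 a).
Proof. by move=> h1 h2 i; rewrite !lineD; case: (h1 i) => -> ->; case: (h2 i) => -> ->. Qed.

Lemma regularB c1 c2 w1 w2 : (forall a, w2 a <= w1 a) -> regular c1 w1 ->
  regular c2 w2 -> regular (c1 - c2) (fun a => w1 a - w2 a).
Proof.
by move=> le21 h1 h2 i; rewrite !lineB //; case: (h1 i) => -> ->; case: (h2 i) => -> ->.
Qed.

Lemma regular0 w : regular 0 w -> forall a, w a = 0.
Proof. by move=> h a; apply/eqP; rewrite -leqn0 -(h a.1).1 leq_line. Qed.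

Lemma npm_line P i : near_perfect_matching P ->
  line fst (chi P) i <= 1 /\ line snd (chi P) i <= 1.
Proof.
case=> _ disjP; rewrite !line_chi; split; apply/card_le1_eqP => x y;
  rewrite !inE => /andP[xP /eqP xi] /andP[yP /eqP yi]; apply: contraTeq isT => yx;
  by have := disjP y x yP xP yx; rewrite xi yi eqxx ?andbF.
Qed.

Lemma npm_missing_source P : 0 < n -> near_perfect_matching P ->
  exists s : 'I_n, forall a, a \in P -> a.1 != s.
Proof.
move=> n0 hP; have [s /eqP hs | covered] := pickP (fun s => line fst (chi P) s == 0).
  exists s => a aP; apply/eqP => a1s.
  by move: (leq_line fst (chi P) a); rewrite /= a1s hs /chi aP.
have : \sum_(s : 'I_n) 1 <= \sum_s line fst (chi P) s.
  by apply: leq_sum => s _; rewrite lt0n covered.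
by rewrite sum1_card card_ord sum_line sum_chi hP.1; lia.
Qed.

Lemma card_le_npm_col_sum P (N : {set 'I_n}) : near_perfect_matching P ->
  #|N| <= (\sum_(j in N) line snd (chi P) j).+1.
Proof.
move=> hP; have := sum_line snd (chi P); rewrite sum_chi hP.1 (bigID (mem N)) /=.
have : \sum_(i < n | i \notin N) line snd (chi P) i <= \sum_(i < n | i \notin N) 1.
  by apply: leq_sum => j _; exact: (npm_line j hP).2.
rewrite sum1_card (eq_card (B := ~: N)) => [|j]; last by rewrite inE.
have := cardsC N; rewrite card_ord.
set inN := \sum_(j in N) _; set outN := \sum_(i < n | _) _.
set cN := #|N|; set cCN := #|~: N|; clearbody inN outN cN cCN; lia.
Qed.

Lemma perfect_matching_graph (g : 'I_n -> 'I_n) : injective g ->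
  perfect_matching [set a : arrow n | g a.1 == a.2].
Proof.
move=> injg; split=> [i | j]; apply/eqP/cards1P.
  exists (i, g i); apply/setP => -[x y]; rewrite !inE /= xpair_eqE.
  by apply/andP/andP => -[/eqP <- /eqP ->]; rewrite eqxx.
exists (invF injg j, j); apply/setP => -[x y]; rewrite !inE /= xpair_eqE.
case: (eqVneq y j) => [-> | _]; rewrite ?andbF // !andbT.
by apply/eqP/eqP => [<- | ->]; rewrite ?invF_f ?f_invF.
Qed.

Lemma weighted_hall c w : 0 < n -> 0 < c -> (forall i, c <= line fst w i) ->
  (forall N : {set 'I_n}, \sum_(j in N) line snd w j < c * #|N|.+1) ->
  exists M, perfect_matching M /\ forall a, chi M a <= w a.
Proof.
move=> n0 c0 rows cols.
pose E i j := 0 < w (i, j).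
have hallE : hall_condition E setT setT.
  move=> S _; rewrite -ltnS -(ltn_pmul2l c0); apply: leq_ltn_trans (cols _).
  rewrite mulnC -sum_nat_const.
  apply: (@leq_trans (\sum_(i in S) line fst w i)); first by apply: leq_sum => i _.
  rewrite !sum_line_in [leqLHS]big_mkcond [leqRHS]big_mkcond /=; apply: leq_sum => -[x y] _ /=.
  case xS: (x \in S) => //; case: (posnP (w (x, y))) => [-> // | wxy].
  suff -> : y \in neighbours E S setT by [].
  by rewrite !inE; apply/existsP; exists x; rewrite xS.
have [g [injg gE]] := hall (Ordinal n0) hallE.
have {}injg : injective g by move=> x y; apply: injg; rewrite inE.
exists [set a : arrow n | g a.1 == a.2]; split; first exact: perfect_matching_graph.
by move=> [x y]; rewrite /chi inE /=; case: eqP => // <-; have [] := gE x.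
Qed.

Lemma regular_perfect_matching c w : 0 < n -> 0 < c -> regular c w ->
  exists M, perfect_matching M /\ forall a, chi M a <= w a.
Proof.
move=> n0 c0 hw; apply: (weighted_hall n0 c0) => [i | N]; first by rewrite (hw i).1.
rewrite (eq_bigr (fun=> c)) => [|j _]; last exact: (hw j).2.
by rewrite sum_nat_const; nia.
Qed.

Lemma regular1_chi w : 0 < n -> regular 1 w ->
  exists M, perfect_matching M /\ forall a, w a = chi M a.
Proof.
move=> n0 hw; have [M [hM Mw]] := regular_perfect_matching n0 (ltn0Sn 0) hw.
exists M; split=> // a; have := regular0 (regularB Mw hw (regular_chi hM)) a.
by have := Mw a; lia.
Qed.

Lemma regular2_split w : 0 < n -> regular 2 w ->
  exists M1 M2, [/\ perfect_matching M1, perfect_matching M2 &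
    forall a, w a = chi M1 a + chi M2 a].
Proof.
move=> n0 hw; have [M1 [hM1 M1w]] := regular_perfect_matching n0 (ltn0Sn 1) hw.
have [M2 [hM2 M2w]] := regular1_chi n0 (regularB M1w hw (regular_chi hM1)).
by exists M1, M2; split=> // a; have := M2w a; have := M1w a; lia.
Qed.

Lemma regular3_avoid_npm w P : 0 < n -> regular 3 w -> near_perfect_matching P ->
  (forall a, chi P a <= w a) ->
  exists M, perfect_matching M /\ forall a, chi M a + chi P a <= w a.
Proof.
move=> n0 hw hP Pw.
have [|i|N|M [hM Mw]] := @weighted_hall 2 (fun a => w a - chi P a) n0 => //.
- by rewrite lineB // (hw i).1; have := (npm_line i hP).1; lia.
- under eq_bigr => j _ do rewrite lineB // (hw j).2.
  rewrite sumnB => [|j _]; last by have := (npm_line j hP).2; lia.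
  by rewrite sum_nat_const; have := card_le_npm_col_sum N hP; lia.
by exists M; split=> // a; have := Mw a; have := Pw a; lia.
Qed.

Lemma rearrange_three_pm A B C P : 0 < n ->
  perfect_matching A -> perfect_matching B -> perfect_matching C ->
  near_perfect_matching P -> (forall a, chi P a <= chi A a + chi B a + chi C a) ->
  exists A' B' C', [/\ perfect_matching A', perfect_matching B', perfect_matching C',
    forall a, chi A a + chi B a + chi C a = chi A' a + chi B' a + chi C' a &
    forall a, chi P a <= chi A' a + chi B' a].
Proof.
move=> n0 hA hB hC hP PT; pose T a := chi A a + chi B a + chi C a.
have hT : regular 3 T := regularD (regularD (regular_chi hA) (regular_chi hB)) (regular_chi hC).
have [C' [hC' C'P]] := regular3_avoid_npm n0 hT hP PT.
have C'T a : chi C' a <= T a by have := C'P a; lia.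
have [A' [B' [hA' hB' AB']]] := regular2_split n0 (regularB C'T hT (regular_chi hC')).
exists A', B', C'; split=> // a; have := AB' a; have := C'P a; have := C'T a; rewrite /T; lia.
Qed.

Lemma pm_sink_inj M x y : perfect_matching M ->
  x \in M -> y \in M -> x.2 = y.2 -> x = y.
Proof.
case=> _ /(_ y.2) /eqP/cards1P[z Mz] xM yM e.
have : x \in [set a in M | a.2 == y.2] by rewrite inE xM e eqxx.
have : y \in [set a in M | a.2 == y.2] by rewrite inE yM eqxx.
by rewrite Mz !inE => /eqP-> /eqP->.
Qed.

Lemma npm_sink_inj P x y : near_perfect_matching P ->
  x \in P -> y \in P -> x.2 = y.2 -> x = y.
Proof.
case=> _ disjP xP yP e; apply/eqP; apply: contraTT isT => xy.
by have := disjP x y xP yP xy; rewrite e eqxx andbF.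
Qed.

Lemma pm_source_arrow M s : perfect_matching M -> exists2 a, a \in M & a.1 = s.
Proof.
case=> /(_ s) /eqP/cards1P[a Ms] _; have : a \in [set a] := set11 a.
by rewrite -Ms inE => /andP[aM /eqP a1]; exists a.
Qed.

Lemma npm_swap P a b : near_perfect_matching P -> a \notin P -> b \in P ->
  (forall x, x \in P -> x.1 != a.1) -> (forall x, x \in P -> x.2 = a.2 -> x = b) ->
  near_perfect_matching (a |: (P :\ b)).
Proof.
move=> [cardP disjP] aP bP srcP sinkP; split.
  by rewrite cardsU1 in_setD1 (negPf aP) andbF -cardP (cardsD1 b P) bP.
have disj_a x : x \in P :\ b -> (a.1 != x.1) && (a.2 != x.2).
  rewrite inE => /andP[xb xP]; rewrite eq_sym srcP //=.
  by apply: contra xb => /eqP e; rewrite inE (sinkP x xP (esym e)).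
move=> x y; rewrite !in_setU1 => /predU1P[-> | xP] /predU1P[-> | yP] xy.
- by rewrite eqxx in xy.
- exact: disj_a.
- by rewrite eq_sym [_.2 == _]eq_sym; exact: disj_a.
- by apply: disjP xy; apply: (subsetP (subD1set P b)).
Qed.

Lemma npm_exchange P Q : 0 < n -> near_perfect_matching P -> perfect_matching Q ->
  #|P :&: Q| < n.-1 -> exists a P', [/\ a \in Q, near_perfect_matching P',
    P' \subset a |: P & #|P' :&: Q| = #|P :&: Q|.+1].
Proof.
move=> n0 hP hQ ltPQ; have [s srcP] := npm_missing_source n0 hP.
have [a aQ a1] := pm_source_arrow s hQ.
have aP : a \notin P by apply/negP => /srcP; rewrite a1 eqxx.
have [b [bP bQ sinkP]] : exists b,
    [/\ b \in P, b \notin Q & forall x, x \in P -> x.2 = a.2 -> x = b].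
  case: (pickP [pred x | (x \in P) && (x.2 == a.2)]) => [b /andP[bP /eqP ba] | noP].
    exists b; split=> [||x xP xa] //; last by apply: npm_sink_inj hP xP bP _; rewrite xa ba.
    by apply: contraNN aP => bQ; rewrite -(pm_sink_inj hQ bQ aQ ba).
  have [b] : exists b, b \in P :\: Q.
    by apply/card_gt0P; have := cardsID Q P; rewrite hP.1; lia.
  rewrite inE => /andP[bQ bP]; exists b; split=> // x xP xa.
  by have := noP x; rewrite /= xP xa eqxx.
exists a, (a |: (P :\ b)); split=> //.
- by apply: npm_swap => // x xP; rewrite a1; exact: srcP.
- by apply: setUS; exact: subD1set.
have -> : (a |: (P :\ b)) :&: Q = a |: (P :&: Q).
  apply/setP => x; rewrite !inE; case: eqVneq => [-> | _] /=; first by rewrite aQ.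
  by case: eqVneq => [-> | _] //=; rewrite (negPf bQ) andbF.
by rewrite cardsU1 inE (negPf aP).
Qed.

Lemma chi_le_setU1 P P' a w : P' \subset a |: P ->
  (forall x, chi P x <= w x) -> 0 < w a -> forall x, chi P' x <= w x.
Proof.
move=> sP' Pw wa x; rewrite {1}/chi; case: (boolP (x \in P')) => // /(subsetP sP').
by case/setU1P => [-> // | xP]; have := Pw x; rewrite /chi xP.
Qed.

Lemma sum_chi_gt0 (s : nat -> {set arrow n}) lo hi a :
  0 < \sum_(lo <= i < hi) chi (s i) a -> exists2 i, lo <= i < hi & a \in s i.
Proof.
move=> pos; have /hasP[i] : has (fun i => a \in s i) (index_iota lo hi).
  apply: contraTT pos => /hasPn none; rewrite -leqNgt leqn0 big1_seq //.
  by move=> i /andP[_ /none]; rewrite /chi => /negPf->.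
by rewrite mem_index_iota; exists i.
Qed.

End Matchings.

Theorem lemma9p2 (n k l : nat) (m q : nat -> {set arrow n}) (p : {set arrow n}) :
  2 <= n -> 4 <= k ->
  (forall i, 1 <= i <= k -> perfect_matching (m i)) ->
  (forall i, 1 <= i <= k -> perfect_matching (q i)) ->
  (forall a, \sum_(1 <= i < k.+1) chi (m i) a = \sum_(1 <= i < k.+1) chi (q i) a) ->
  l <= n - 2 ->
  near_perfect_matching p ->
  (forall a, chi p a <= chi (m 1) a + chi (m 2) a) ->
  #|p :&: q 1| = l ->
  exists j : nat, exists m1' m2' mj' p' : {set arrow n},
    3 <= j <= k /\
    perfect_matching m1' /\ perfect_matching m2' /\ perfect_matching mj' /\
    near_perfect_matching p' /\
    (forall a, chi (m 1) a + chi (m 2) a + chi (m j) a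
               = chi m1' a + chi m2' a + chi mj' a) /\
    (forall a, chi p' a <= chi m1' a + chi m2' a) /\
    #|p' :&: q 1| = l.+1.
Proof.
move=> n2 k4 hm hq sum_mq le_l hp p_m12 card_pq.
have n0 : 0 < n by lia.
have hq1 : perfect_matching (q 1) by apply: hq; lia.
have [a [p' [aq1 hp' sub_p' card_p'q]]] : exists a p', [/\ a \in q 1,
    near_perfect_matching p', p' \subset a |: p & #|p' :&: q 1| = #|p :&: q 1|.+1].
  by apply: npm_exchange => //; rewrite card_pq; lia.
have [i /andP[i1 ik] ai] : exists2 i, 1 <= i < k.+1 & a \in m i.
  apply: sum_chi_gt0; rewrite sum_mq big_ltn; last by lia.
  by rewrite {1}/chi aq1.
pose j := maxn 3 i.
have hj : 3 <= j <= k by rewrite /j; lia.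
have [hm1 hm2 hmj] : [/\ perfect_matching (m 1), perfect_matching (m 2) &
    perfect_matching (m j)] by split; apply: hm; lia.
have p'_m12j : forall x, chi p' x <= chi (m 1) x + chi (m 2) x + chi (m j) x.
  apply: (chi_le_setU1 sub_p') => [y | ]; first by have := p_m12 y; lia.
  have : i = 1 \/ i = 2 \/ i = j by rewrite /j; lia.
  by case=> [|[|]] e; rewrite e in ai; rewrite /chi ai /=; lia.
have [m1' [m2' [mj' [hm1' hm2' hmj' sum_eq p'_le]]]] :=
  rearrange_three_pm n0 hm1 hm2 hmj hp' p'_m12j.
by exists j, m1', m2', mj', p'; rewrite -card_pq.
Qed.
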